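(* Let $N$ be a positive-integer-valued random variable with probability generating function $Q$ (so $Q$ is a continuous strictly increasing bijection of $[0,1]$ onto itself, with inverse $Q^{-1}$). (i) If $Q$ satisfies $$1-Q(1-s)=Q^{-1}(s)\quad\text{for all }0<s<1,$$ then for every continuous d.f. $F$ on $\mathbb{R}$, every $a\in\mathbb{R}$ and $b>0$: $Q[F(x)]=F(a+bx)$ for all $x$ holds if and only if $Q[\bar F(a+bx)]=\bar F(x)$ for all $x$. That is, $N$-max stability of $F$ is equivalent to $N$-min stability of $F$ (with the same constants). (ii) Conversely, if there is a continuous d.f. $F$ on $\mathbb{R}$ with $\{F(x):x\in\mathbb{R}\}\supseteq(0,1)$ and constants $a\in\mathbb{R}$, $b>0$ such that both $Q[F(x)]=F(a+bx)$ and $Q[\bar F(a+bx)]=\bar F(x)$ hold for all $x\in\mathbb{R}$, then $1-Q(1-s)=Q^{-1}(s)$ for all $0<s<1$.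
   Context: For a continuous d.f. $F$ on $\mathbb{R}$ and a positive-integer-valued random variable $N$ with PGF $Q$, $F$ is called $N$-max stable if $Q[F(x)]=F(a+bx)$ for all $x\in\mathbb{R}$ and some $a\in\mathbb{R}$, $b>0$, and $N$-min stable if $Q[\bar F(a+bx)]=\bar F(x)$ for all $x\in\mathbb{R}$ and some $a\in\mathbb{R}$, $b>0$, where $\bar F=1-F$. *)

From Stdlib Require Import Reals ClassicalEpsilon.
From Coquelicot Require Import Coquelicot.
Open Scope R_scope.

(* p k = P(N = k): distribution of a positive-integer-valued random variable N. *)
Definition pos_int_distribution (p : nat -> R) : Prop :=
  p O = 0 /\ (forall k, 0 <= p k) /\ is_series p 1.

Definition pgf (p : nat -> R) (s : R) : R := Series (fun k => p k * s ^ k).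

(* Inverse of a map of [0,1] onto itself: the t in [0,1] with Q t = s
   (chosen by Hilbert's epsilon; well defined when Q is a bijection of [0,1]). *)
Definition inv01 (Q : R -> R) (s : R) : R :=
  epsilon (inhabits 0) (fun t => 0 <= t <= 1 /\ Q t = s).

Definition continuous_df (F : R -> R) : Prop :=
  (forall x y, x <= y -> F x <= F y) /\
  (forall x, continuity_pt F x) /\
  is_lim F m_infty 0 /\ is_lim F p_infty 1.

Definition Fbar (F : R -> R) (x : R) : R := 1 - F x.

From Stdlib Require Import Reals Lra ClassicalEpsilon Classical.
From Coquelicot Require Import Coquelicot.
Open Scope R_scope.

(* Write [Q^*(s) = 1 - Q(1 - s)] for the dual of [Q].  In these terms
   max-stability reads [Q (F x) = F (a + b x)] and min-stability reads
   [Q^* (F (a + b x)) = F x], so the two are equivalent as soon as [Q^*]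
   inverts [Q] on [0,1], which is what the condition [Q^* = Q^-1] says.
   Moreover [Q^* (Q u) = u] at [u = 1 - s] already gives [Q (Q^* s) = s];
   in part (ii) both stabilities yield [Q^* (Q u) = u] for every [u] in the
   range of [F], hence [Q^* s] is the preimage of [s] under [Q]. *)

Lemma Series_zero : Series (fun _ : nat => 0) = 0.
Proof.
  rewrite (Series_ext _ (fun n => 0 * (fun _ : nat => 0) n)) by (intros; ring).
  rewrite Series_scal_l; ring.
Qed.

Lemma Series_nonneg (d : nat -> R) :
  (forall n, 0 <= d n) -> ex_series d -> 0 <= Series d.
Proof.
  intros Hd Ed. rewrite <- Series_zero.
  apply Series_le; auto. intros n; split; [lra | auto].
Qed.

Lemma Series_ge_term (d : nat -> R) k :
  (forall n, 0 <= d n) -> ex_series d -> d k <= Series d.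
Proof.
  intros Hd Ed. rewrite (Series_incr_n d (S k)) by auto with arith.
  assert (Htail : 0 <= Series (fun j => d (S k + j)%nat)).
  { apply Series_nonneg; auto. apply ex_series_incr_n; auto. }
  destruct k as [|k]; simpl in *.
  - lra.
  - pose proof (cond_pos_sum d k Hd). lra.
Qed.

Lemma pow_le_1 s n : 0 <= s <= 1 -> s ^ n <= 1.
Proof. intros Hs. rewrite <- (pow1 n). apply pow_incr. lra. Qed.

Lemma pow_lt_pow_l s t n : 0 <= s < t -> s ^ S n < t ^ S n.
Proof.
  intros Hst. induction n as [|n IH]; [simpl; lra|].
  change (s * s ^ S n < t * t ^ S n).
  assert (0 <= s ^ S n) by (apply pow_le; lra).
  apply Rle_lt_trans with (s * t ^ S n).
  - apply Rmult_le_compat_l; lra.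
  - apply Rmult_lt_compat_r; [apply pow_lt|]; lra.
Qed.

Definition dual (Q : R -> R) (s : R) : R := 1 - Q (1 - s).

Lemma Q_dual_of_dual_Q (Q : R -> R) s :
  dual Q (Q (1 - s)) = 1 - s -> Q (dual Q s) = s.
Proof. unfold dual. intros H. lra. Qed.

Lemma max_stable_iff_min_stable (Q : R -> R) (f g : R -> R) :
  (forall u, 0 <= u <= 1 -> dual Q (Q u) = u) ->
  (forall x, 0 <= f x <= 1) -> (forall x, 0 <= g x <= 1) ->
  (forall x, Q (f x) = g x) <-> (forall x, dual Q (g x) = f x).
Proof.
  intros Hdual Hf Hg. split; intros H x.
  - rewrite <- H. apply Hdual, Hf.
  - rewrite <- H. apply Q_dual_of_dual_Q, Hdual. pose proof (Hg x). lra.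
Qed.

Lemma continuous_df_range F x : continuous_df F -> 0 <= F x <= 1.
Proof.
  intros (Hmono & _ & Hlim0 & Hlim1). split.
  - assert (H : Rbar_le 0 (F x)).
    { apply (is_lim_le_loc F (fun _ => F x) m_infty); auto.
      - exists x; intros; apply Hmono; lra.
      - apply is_lim_const. }
    exact H.
  - assert (H : Rbar_le (F x) 1).
    { apply (is_lim_le_loc (fun _ => F x) F p_infty); auto.
      - exists x; intros; apply Hmono; lra.
      - apply is_lim_const. }
    exact H.
Qed.

Section ProbabilityGeneratingFunction.

Variable p : nat -> R.
Hypothesis Hp : pos_int_distribution p.

Lemma pgf_ex_series s : 0 <= s <= 1 -> ex_series (fun k => p k * s ^ k).
Proof.
  intros Hs. destruct Hp as (_ & Hnonneg & Hsum).
  apply (@ex_series_le R_AbsRing R_CompleteNormedModule _ p); [|exists 1; exact Hsum].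
  intros n. change norm with Rabs.
  rewrite Rabs_mult, (Rabs_right (p n)) by (apply Rle_ge, Hnonneg).
  rewrite <- RPow_abs, (Rabs_right s) by lra.
  rewrite <- (Rmult_1_r (p n)) at 2. apply Rmult_le_compat_l; auto.
  apply pow_le_1. lra.
Qed.

Lemma pgf_range s : 0 <= s <= 1 -> 0 <= pgf p s <= 1.
Proof.
  intros Hs. destruct Hp as (_ & Hnonneg & Hsum). unfold pgf.
  assert (Hterm : forall n, 0 <= p n * s ^ n <= p n).
  { intros n. split.
    - apply Rmult_le_pos; auto. apply pow_le; lra.
    - rewrite <- (Rmult_1_r (p n)) at 2. apply Rmult_le_compat_l; auto.
      apply pow_le_1. lra. }
  split.
  - apply Series_nonneg; [apply Hterm | apply pgf_ex_series; auto].
  - rewrite <- (is_series_unique _ _ Hsum).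
    apply Series_le; [apply Hterm | exists 1; exact Hsum].
Qed.

Lemma pgf0 : pgf p 0 = 0.
Proof.
  unfold pgf. rewrite (Series_ext _ (fun _ => 0)); [apply Series_zero|].
  intros [|n]; simpl; [|ring]. destruct Hp as (Hp0 & _). rewrite Hp0; ring.
Qed.

Lemma pgf1 : pgf p 1 = 1.
Proof.
  unfold pgf. rewrite (Series_ext _ p) by (intros; rewrite pow1; ring).
  destruct Hp as (_ & _ & Hsum). apply is_series_unique; auto.
Qed.

Lemma pos_int_distribution_support : exists k, 0 < p (S k).
Proof.
  destruct Hp as (Hp0 & Hnonneg & Hsum).
  apply NNPP. intros Hnone.
  assert (Hzero : forall n, p n = 0).
  { intros [|k]; auto. pose proof (Hnonneg (S k)).
    destruct (Req_dec (p (S k)) 0); auto. exfalso. apply Hnone. exists k. lra. }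
  apply is_series_unique in Hsum.
  rewrite (Series_ext _ _ Hzero), Series_zero in Hsum. lra.
Qed.

Lemma pgf_lt s t : 0 <= s -> s < t -> t <= 1 -> pgf p s < pgf p t.
Proof.
  intros Hs Hst Ht.
  destruct pos_int_distribution_support as [k Hk].
  destruct Hp as (_ & Hnonneg & _).
  set (d := fun n => p n * t ^ n - p n * s ^ n).
  assert (Hdiff : is_series d (pgf p t - pgf p s)).
  { apply (is_series_minus (fun n => p n * t ^ n) (fun n => p n * s ^ n));
      apply Series_correct, pgf_ex_series; lra. }
  assert (Hd : forall n, 0 <= d n).
  { intros n; unfold d. rewrite <- Rmult_minus_distr_l.
    apply Rmult_le_pos; auto. pose proof (pow_incr s t n). lra. }
  assert (Hdk : 0 < d (S k)).
  { unfold d. rewrite <- Rmult_minus_distr_l. apply Rmult_lt_0_compat; auto.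
    pose proof (pow_lt_pow_l s t k). lra. }
  pose proof (Series_ge_term d (S k) Hd (ex_intro _ _ Hdiff)) as Hle.
  rewrite (is_series_unique _ _ Hdiff) in Hle. lra.
Qed.

Lemma pgf_inj s t : 0 <= s <= 1 -> 0 <= t <= 1 -> pgf p s = pgf p t -> s = t.
Proof.
  intros Hs Ht E. destruct (Rtotal_order s t) as [H|[H|H]]; auto.
  - pose proof (pgf_lt s t); lra.
  - pose proof (pgf_lt t s); lra.
Qed.

Lemma inv01_pgf s t : 0 <= t <= 1 -> pgf p t = s -> inv01 (pgf p) s = t.
Proof.
  intros Ht E. unfold inv01.
  destruct (epsilon_spec (inhabits 0) (fun t => 0 <= t <= 1 /\ pgf p t = s))
    as [Hrange HQ]; [exists t; auto|].
  apply pgf_inj; auto. congruence.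
Qed.

Lemma dual_pgf_pgf :
  (forall s, 0 < s < 1 -> dual (pgf p) s = inv01 (pgf p) s) ->
  forall u, 0 <= u <= 1 -> dual (pgf p) (pgf p u) = u.
Proof.
  intros Hinv u Hu. unfold dual.
  destruct (Req_dec u 0) as [->|H0]; [rewrite pgf0, Rminus_0_r, pgf1; ring|].
  destruct (Req_dec u 1) as [->|H1]; [rewrite pgf1, Rminus_eq_0, pgf0; ring|].
  assert (Hmid : 0 < pgf p u < 1).
  { rewrite <- pgf0, <- pgf1. split; apply pgf_lt; lra. }
  change (dual (pgf p) (pgf p u) = u).
  rewrite Hinv by exact Hmid. apply inv01_pgf; auto.
Qed.

End ProbabilityGeneratingFunction.

Theorem theorem2p2 (p : nat -> R) (Hp : pos_int_distribution p) :
  ( (forall s, 0 < s < 1 -> 1 - pgf p (1 - s) = inv01 (pgf p) s) ->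
    forall (F : R -> R) (a b : R), continuous_df F -> 0 < b ->
      ((forall x, pgf p (F x) = F (a + b * x)) <->
       (forall x, pgf p (Fbar F (a + b * x)) = Fbar F x)) )
  /\
  ( (exists (F : R -> R) (a b : R),
       continuous_df F /\
       (forall y, 0 < y < 1 -> exists x, F x = y) /\
       0 < b /\
       (forall x, pgf p (F x) = F (a + b * x)) /\
       (forall x, pgf p (Fbar F (a + b * x)) = Fbar F x)) ->
    forall s, 0 < s < 1 -> 1 - pgf p (1 - s) = inv01 (pgf p) s ).
Proof.
  assert (min_stable_as_dual : forall F x y,
    pgf p (Fbar F y) = Fbar F x <-> dual (pgf p) (F y) = F x).
  { intros F x y. unfold dual, Fbar. split; intros H; lra. }
  split.
  - intros Hinv F a b HF _.
    rewrite (max_stable_iff_min_stable (pgf p) F (fun x => F (a + b * x))).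
    + split; intros H x; apply min_stable_as_dual, H.
    + exact (dual_pgf_pgf p Hp Hinv).
    + intros x; apply continuous_df_range, HF.
    + intros x; apply continuous_df_range, HF.
  - intros (F & a & b & HF & Hsurj & _ & Hmax & Hmin_stable) s Hs.
    destruct (Hsurj (1 - s)) as [x Hx]; [lra|].
    assert (Hdual : pgf p (dual (pgf p) s) = s).
    { apply Q_dual_of_dual_Q. rewrite <- Hx, Hmax. apply min_stable_as_dual, Hmin_stable. }
    symmetry. apply (inv01_pgf p Hp); [|exact Hdual].
    pose proof (pgf_range p Hp (1 - s)). unfold dual. lra.
Qed.
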